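(* If $A$ and $B$ are archimedean $*$-algebras, then so are $A\oplus B$ and $A\otimes_{\mathbb{Q}}B$, with involutions $(x,y)^*=(x^*,y^* )$ and $(x\otimes y)^*=x^*\otimes y^*$.
   Context: A $*$-algebra is a unital algebra over $\mathbb{Q}$ with a $\mathbb{Q}$-linear involution $x\mapsto x^*$ satisfying $(xy)^*=y^*x^*$; rational scalars are identified with multiples of the unit. $A_+=\{\sum_{i=1}^n x_i^*x_i: n\in\mathbb{N},x_i\in A\}$, and $x\leq y$ means $y-x\in A_+$. For $x\in A$, $\|x\|=\sqrt{\inf\{\alpha\in\mathbb{Q}_{>0}: x^*x\leq\alpha\}}\in[0,\infty]$. $A$ is archimedean if $-1\notin A_+$ and $\|x\|<\infty$ for every $x\in A$. *)

From HB Require Import structures.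
From mathcomp Require Import all_boot all_order all_algebra.
Set Implicit Arguments. Unset Strict Implicit. Unset Printing Implicit Defensive.
Import Order.TTheory GRing.Theory Num.Theory.
Local Open Scope ring_scope.

Definition is_star (A : algType rat) (s : A -> A) : Prop :=
  [/\ forall (k : rat) (x y : A), s (k *: x + y) = k *: s x + s y,
      forall x : A, s (s x) = x
    & forall x y : A, s (x * y) = s y * s x].

Definition pos_cone (A : algType rat) (s : A -> A) (a : A) : Prop :=
  exists l : seq A, a = \sum_(x <- l) s x * x.

Definition star_le (A : algType rat) (s : A -> A) (x y : A) : Prop :=
  pos_cone s (y - x).

(* ||x|| < oo  iff  the set {alpha in Q_{>0} : x^* x <= alpha} is nonempty
   (the infimum of the empty set being +oo). *)
Definition norm_finite (A : algType rat) (s : A -> A) (x : A) : Prop :=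
  exists alpha : rat, 0 < alpha /\ star_le s (s x * x) (alpha%:A).

Definition archimedean (A : algType rat) (s : A -> A) : Prop :=
  ~ pos_cone s (-1) /\ forall x : A, norm_finite s x.

Definition bilinear_map (A B : algType rat) (V : lmodType rat)
    (f : A -> B -> V) : Prop :=
  (forall (k : rat) (a a' : A) (b : B), f (k *: a + a') b = k *: f a b + f a' b) /\
  (forall (k : rat) (a : A) (b b' : B), f a (k *: b + b') = k *: f a b + f a b').

Definition linear_map (T : algType rat) (V : lmodType rat) (g : T -> V) : Prop :=
  forall (k : rat) (x y : T), g (k *: x + y) = k *: g x + g y.

Definition is_tensor_algebra (A B T : algType rat) (t : A -> B -> T) : Prop :=
  [/\ bilinear_map t,
      (forall (V : lmodType rat) (f : A -> B -> V), bilinear_map f ->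
         exists g : T -> V, [/\ linear_map g,
            (forall a b, g (t a b) = f a b)
          & forall g' : T -> V, linear_map g' -> (forall a b, g' (t a b) = f a b) ->
               forall z, g' z = g z]),
      (forall a a' b b', t a b * t a' b' = t (a * a') (b * b'))
    & t 1 1 = 1].

From HB Require Import structures.
From mathcomp Require Import all_boot all_order all_algebra.
From mathcomp Require Import boolp classical_sets reals Rstruct.
From mathcomp Require Import ring lra.
Import Order.TTheory GRing.Theory Num.Theory.
Set Implicit Arguments. Unset Strict Implicit. Unset Printing Implicit Defensive.
Local Open Scope ring_scope.

(* The direct sum is handled componentwise.  For the tensor product, an
   archimedean *-algebra carries a state: a unital, hermitian, positive
   Q-linear functional into the reals, obtained by Zorn's lemma from the
   functional on Q 1, where the value at a new hermitian y is the supremum of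
   the values below y (it exists since -a <= y <= a for some rational a).
   For states phi on A and psi on B, the functional phi (x) psi is positive:
   for z = sum_i a_i (x) b_i, its value at z^* z is sum_ij P_ij Q_ij with the
   positive semidefinite Gram matrices P_ij = phi (a_i^* a_j) and
   Q_ij = psi (b_i^* b_j), which is nonnegative by the Schur product theorem.
   As it maps -1 to -1, -1 is not a sum of hermitian squares.  Norms are
   finite because ||a (x) b|| <= ||a|| ||b||, (x + y)^* (x + y) <=
   2 (x^* x + y^* y), and every element of A (x) B is a sum of pure tensors
   (a rational functional vanishing on their span is zero by the universal
   property). *)

Section LinearFacts.
Variables (U V : lmodType rat) (f : U -> V).
Hypothesis f_lin : linear f.
HB.instance Definition _ := GRing.isLinear.Build rat U V *:%R f f_lin.

Lemma linD x y : f (x + y) = f x + f y. Proof. exact: linearD. Qed.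
Lemma linB x y : f (x - y) = f x - f y. Proof. exact: linearB. Qed.
Lemma linZ k x : f (k *: x) = k *: f x. Proof. exact: linearZ. Qed.
Lemma lin_sum (I : Type) (r : seq I) (F : I -> U) :
  f (\sum_(i <- r) F i) = \sum_(i <- r) f (F i).
Proof. exact: linear_sum. Qed.
End LinearFacts.

(* [R] as a Q-vector space: real-valued Q-linear maps are linear maps into
   [realQ R], which lets the universal property of the tensor product apply. *)
Definition realQ (R : numFieldType) : Type := R.
HB.instance Definition _ (R : numFieldType) := GRing.Zmodule.on (realQ R).

Section RealQ.
Variable R : numFieldType.
Definition realQ_scale (k : rat) (x : realQ R) : realQ R := ratr k * (x : R).
Fact realQ_scaleA k l x : realQ_scale k (realQ_scale l x) = realQ_scale (k * l) x.
Proof. by rewrite /realQ_scale rmorphM mulrA. Qed.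
Fact realQ_scale1 : left_id 1 realQ_scale.
Proof. by move=> x; rewrite /realQ_scale rmorph1 mul1r. Qed.
Fact realQ_scaleDr : right_distributive realQ_scale +%R.
Proof. by move=> k x y; rewrite /realQ_scale mulrDr. Qed.
Fact realQ_scaleDl x : {morph realQ_scale^~ x : k l / k + l}.
Proof. by move=> k l; rewrite /realQ_scale rmorphD mulrDl. Qed.
End RealQ.
HB.instance Definition _ (R : numFieldType) := GRing.Zmodule_isLmodule.Build rat (realQ R)
  (@realQ_scaleA R) (@realQ_scale1 R) (@realQ_scaleDr R) (@realQ_scaleDl R).

Section RatLinear.
Variables (X : lmodType rat) (R : numFieldType).

Definition ratr_linear (f : X -> R) := forall k x y, f (k *: x + y) = ratr k * f x + f y.

Variables (f : X -> R) (f_lin : ratr_linear f).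

Lemma ratr_linear_realQ : linear (f : X -> realQ R). Proof. exact: f_lin. Qed.
Lemma ratr_linearZ k x : f (k *: x) = ratr k * f x. Proof. exact (linZ ratr_linear_realQ k x). Qed.
Lemma ratr_linear_sum (I : Type) (r : seq I) (F : I -> X) :
  f (\sum_(i <- r) F i) = \sum_(i <- r) f (F i).
Proof. exact (lin_sum ratr_linear_realQ r F). Qed.
End RatLinear.

Section StarAlgebra.
Variables (A : algType rat) (s : A -> A).
Hypothesis s_star : is_star s.

Lemma star_linear : linear s. Proof. by case: s_star => h _ _ k x y; apply: h. Qed.
Lemma starK x : s (s x) = x. Proof. by case: s_star. Qed.
Lemma starM x y : s (x * y) = s y * s x. Proof. by case: s_star. Qed.
Lemma star1 : s 1 = 1.
Proof. by rewrite -{1}(mulr1 (s 1)) -{2}(starK 1) -starM mulr1 starK. Qed.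
Lemma star_scalar k : s k%:A = k%:A.
Proof. by rewrite (linZ star_linear) star1. Qed.

Lemma pos_cone0 : pos_cone s 0.
Proof. by exists [::]; rewrite big_nil. Qed.
Lemma pos_coneD x y : pos_cone s x -> pos_cone s y -> pos_cone s (x + y).
Proof. by move=> [l1 ->] [l2 ->]; exists (l1 ++ l2); rewrite big_cat. Qed.
Lemma pos_cone_sq x : pos_cone s (s x * x).
Proof. by exists [:: x]; rewrite big_seq1. Qed.
Lemma pos_cone_herm x : pos_cone s x -> s x = x.
Proof.
move=> [l ->]; rewrite (lin_sum star_linear).
by apply: eq_bigr => y _; rewrite starM starK.
Qed.

Lemma pos_coneMn x n : pos_cone s x -> pos_cone s (x *+ n).
Proof.
move=> x_ge0; elim: n => [|n IHn]; first by rewrite mulr0n; exact: pos_cone0.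
by rewrite mulrS; apply: pos_coneD.
Qed.

Lemma pos_coneZsq q x : pos_cone s x -> pos_cone s ((q ^+ 2) *: x).
Proof.
move=> [l ->]; exists [seq q *: y | y <- l]; rewrite big_map scaler_sumr.
apply: eq_bigr => y _.
by rewrite (linZ star_linear) -scalerAl -scalerAr scalerA expr2.
Qed.

Lemma pos_coneZ k x : 0 <= k -> pos_cone s x -> pos_cone s (k *: x).
Proof.
move=> k_ge0 x_ge0; set n := `|numq k|%N; set d := `|denq k|%N.
have d_neq0 : d%:R != 0 :> rat by rewrite pnatr_eq0 absz_eq0 denq_eq0.
have kE : k = n%:R / d%:R.
  by rewrite -[LHS]divq_num_den !pmulrn !gez0_abs ?numq_ge0 // ltW ?denq_gt0.
have -> : k *: x = (d%:R^-1 ^+ 2 *: x) *+ (n * d).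
  by rewrite -scaler_nat scalerA natrM kE; congr (_ *: _); field.
exact/pos_coneMn/pos_coneZsq.
Qed.

Lemma pos_cone_scalar k : 0 <= k -> pos_cone s k%:A.
Proof.
by move=> k_ge0; apply: pos_coneZ => //; rewrite -[1]mulr1 -{1}star1; exact: pos_cone_sq.
Qed.

Lemma norm_finite0 : norm_finite s 0.
Proof.
by exists 1; split => //; rewrite /star_le mulr0 subr0; exact: pos_cone_scalar.
Qed.

Lemma star_parallelogram x y :
  s (x + y) * (x + y) + s (x - y) * (x - y) = (s x * x + s y * y) *+ 2.
Proof.
have s_lin := star_linear.
rewrite (linD s_lin) (linB s_lin) mulrDl mulrBl !mulrDr !mulrN opprD opprK.
set u := s x * x; set v := s y * y; set w := s x * y; set z := s y * x.
rewrite addrACA [u + w + _]addrACA [z + v + _]addrACA !subrr addr0 add0r.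
by rewrite mulr2n addrACA.
Qed.

Lemma norm_finiteD x y : norm_finite s x -> norm_finite s y -> norm_finite s (x + y).
Proof.
move=> [a [a_gt0 xa]] [b [b_gt0 yb]]; exists ((a + b) *+ 2).
split; first by rewrite pmulrn_lgt0 // addr_gt0.
rewrite /star_le.
suff -> : ((a + b) *+ 2)%:A - s (x + y) * (x + y) =
    s (x - y) * (x - y) + ((a%:A - s x * x) + (b%:A - s y * y)) *+ 2.
  by apply/pos_coneD/pos_coneMn/pos_coneD/yb/xa; exact: pos_cone_sq.
apply/eqP; rewrite subr_eq addrAC [s (x - y) * _ + _]addrC star_parallelogram.
by rewrite -mulrnDl addrACA [s x * x + _]addrC [s y * y + _]addrC !subrK -scalerMnl scalerDl.
Qed.

Lemma herm_bounded y : s y = y -> norm_finite s y ->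
  exists a : rat, pos_cone s (a%:A - y) /\ pos_cone s (y + a%:A).
Proof.
move=> yh [b [b_gt0]]; rewrite /star_le yh => yb.
pose c := (1 + b) / 2; exists c.
suff cone_shift r : r ^+ 2 = 1 -> pos_cone s (r *: y + c%:A).
  split; first by rewrite addrC -scaleN1r; apply: cone_shift; rewrite sqrrN expr1n.
  by rewrite -(scale1r y); apply: cone_shift; rewrite expr1n.
move=> r_sq.
suff -> : r *: y + c%:A = 2^-1 *: (s (1 + r *: y) * (1 + r *: y) + (b%:A - y * y)).
  by apply/pos_coneZ/pos_coneD/yb => //; exact: pos_cone_sq.
have s_lin := star_linear.
rewrite (linD s_lin) (linZ s_lin) star1 yh mulrDl !mulrDr !mul1r mulr1.
rewrite -scalerAl -scalerAr scalerA -expr2 r_sq scale1r.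
rewrite -!addrA [y * y + _]addrCA subrr addr0 [1 + _]addrCA !addrA.
rewrite [r *: y + 1 + _]addrAC -mulr2n -addrA.
have -> : 1 + b%:A = (1 + b)%:A :> A by rewrite scalerDl scale1r.
rewrite scalerDr -scaler_nat !scalerA mulrA mulVf // mul1r.
by rewrite mulrC.
Qed.
End StarAlgebra.

Definition vcons (T : Type) (t : T) (c : nat -> T) (i : nat) : T :=
  if i is i'.+1 then c i' else t.

Section GramForms.
Variable R : archiRealFieldType.
Implicit Types (p q : nat -> nat -> R) (a c : nat -> R).

Definition qform n p c := \sum_(i < n) \sum_(j < n) c i * c j * p i j.
Definition lform n a c := \sum_(j < n) c j * a j.
Definition matdot n p q := \sum_(i < n) \sum_(j < n) p i j * q i j.

Definition symm p := forall i j, p i j = p j i.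
Definition psd n p := forall c, 0 <= qform n p c.
(* Gram matrices of Q-linear functionals are a priori only nonnegative on
   rational vectors; [rat_psd_psd] removes this restriction by density. *)
Definition rat_psd n p := forall c : nat -> rat, 0 <= qform n p (fun i => ratr (c i)).

Definition vdrop1 c i := c i.+1.
Definition row0 p j := p 0%N j.+1.
Definition mxdrop1 p i j := p i.+1 j.+1.
Definition schur p i j := p i.+1 j.+1 - p 0%N i.+1 * p 0%N j.+1 / p 0%N 0%N.

Lemma symm_mxdrop1 p : symm p -> symm (mxdrop1 p).
Proof. by move=> p_sym i j; rewrite /mxdrop1 p_sym. Qed.

Lemma symm_schur p : symm p -> symm (schur p).
Proof. by move=> p_sym i j; rewrite /schur (p_sym i.+1) [p 0%N i.+1 * _]mulrC. Qed.

Lemma lform0 n a : lform n a (fun=> 0) = 0.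
Proof. by rewrite /lform big1 // => i _; rewrite mul0r. Qed.

Lemma qform0 n p : qform n p (fun=> 0) = 0.
Proof. by rewrite /qform big1 // => i _; rewrite big1 // => j _; rewrite !mul0r. Qed.

Lemma qform_recl n p c : symm p ->
  qform n.+1 p c = c 0%N ^+ 2 * p 0%N 0%N + 2 * c 0%N * lform n (row0 p) (vdrop1 c)
                   + qform n (mxdrop1 p) (vdrop1 c).
Proof.
move=> p_sym; rewrite /qform; under eq_bigr => i _ do rewrite big_ord_recl /=.
rewrite big_ord_recl big_split /= -!addrA expr2; congr (_ + _).
rewrite addrA; congr (_ + _).
rewrite /lform mulr_sumr -big_split /=; apply: eq_bigr => i _.
rewrite /vdrop1 /row0 /bump /= add1n (p_sym i.+1); ring.
Qed.

Lemma matdot_recl n p q : symm p -> symm q ->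
  matdot n.+1 p q = p 0%N 0%N * q 0%N 0%N + 2 * lform n (row0 q) (row0 p)
                    + matdot n (mxdrop1 p) (mxdrop1 q).
Proof.
move=> p_sym q_sym; rewrite /matdot; under eq_bigr => i _ do rewrite big_ord_recl /=.
rewrite big_ord_recl big_split /= -!addrA; congr (_ + _).
rewrite addrA; congr (_ + _).
rewrite /lform mulr_sumr -big_split /=; apply: eq_bigr => i _.
rewrite /row0 /bump /= p_sym [q _ 0%N]q_sym; ring.
Qed.

Lemma qform_schur n q c : q 0%N 0%N != 0 ->
  qform n (schur q) c = qform n (mxdrop1 q) c - lform n (row0 q) c ^+ 2 / q 0%N 0%N.
Proof.
move=> q00; rewrite expr2 /lform !mulr_suml /qform -sumrB; apply: eq_bigr => i _.
rewrite big_distrr /= big_distrl /= -sumrB; apply: eq_bigr => j _.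
by rewrite /schur /mxdrop1 /row0; field.
Qed.

Lemma complete_square (a m Q c0 : R) : a != 0 ->
  c0 ^+ 2 * a + 2 * c0 * m + Q = a * (c0 + m / a) ^+ 2 + (Q - m ^+ 2 / a).
Proof. by move=> a0; field. Qed.

Lemma lform_rat0 n a : (forall c : nat -> rat, lform n a (fun i => ratr (c i)) = 0) ->
  forall c, lform n a c = 0.
Proof.
elim: n a => [|n IHn] a a_rat0 c; first by rewrite /lform big_ord0.
have lform_recl c' : lform n.+1 a c' = c' 0%N * a 0%N + lform n (vdrop1 a) (vdrop1 c').
  by rewrite /lform big_ord_recl.
have a0 : a 0%N = 0.
  have := a_rat0 (vcons 1 (fun=> 0)); rewrite lform_recl rmorph1 mul1r.
  by rewrite /vdrop1 /= rmorph0 lform0 addr0.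
rewrite lform_recl a0 mulr0 add0r; apply: IHn => c'.
by have := a_rat0 (vcons 0 c'); rewrite lform_recl rmorph0 mul0r add0r.
Qed.

Lemma rat_affine_ge0 (m K : R) : (forall t : rat, 0 <= 2 * ratr t * m + K) -> m = 0.
Proof.
move=> ge0; apply: contraPeq ge0 => m_neq0; apply/existsNP.
pose x := - (`|K| + 1) / (2 * m).
have mxE : 2 * m * x = - (`|K| + 1) by rewrite /x; field.
suff [t mt_small] : exists t : rat, 2 * m * ratr t < - (`|K| + 1).
  by exists t; apply/negP; rewrite -ltNge; have := ler_norm K; lra.
move: m_neq0; rewrite neq_lt => /orP[m_lt0|m_gt0].
- have [t] := rat_in_itvoo (ltr_pwDr ltr01 (lexx x)).
  rewrite in_itv /= => /andP[xt _]; exists t.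
  by rewrite -mxE ltr_nM2l // pmulr_rlt0.
- have [t] := rat_in_itvoo (ltr_nwDr (@ltrN10 R) (lexx x)).
  rewrite in_itv /= => /andP[_ tx]; exists t.
  by rewrite -mxE ltr_pM2l // pmulr_rgt0.
Qed.

Lemma rat_sq_approx (a x eps : R) : 0 < a -> 0 < eps ->
  exists t : rat, a * (ratr t - x) ^+ 2 < eps.
Proof.
move=> a_gt0 eps_gt0; pose d := eps / (a + eps).
have d_gt0 : 0 < d by rewrite divr_gt0 // addr_gt0.
have adE : d * (a + eps) = eps by rewrite /d divfK // gt_eqF // addr_gt0.
have [t] := rat_in_itvoo (ltr_pwDr d_gt0 (lexx x)).
rewrite in_itv /= => /andP[xt tx]; exists t.
have d_lt1 : d < 1.
  have : d * (a + eps) < 1 * (a + eps) by rewrite mul1r adE ltrDr.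
  by rewrite ltr_pM2r // addr_gt0.
set y := ratr t - x.
have y_gt0 : 0 < y by rewrite subr_gt0.
have y_lt_d : y < d by rewrite /y; lra.
have : a * y < a * d by rewrite ltr_pM2l.
have : y * y < y by rewrite gtr_pMr //; lra.
rewrite expr2; nra.
Qed.

Lemma rat_psd_mxdrop1 n p : symm p -> rat_psd n.+1 p -> rat_psd n (mxdrop1 p).
Proof.
move=> p_sym p_psd c; have := p_psd (vcons 0 c); rewrite qform_recl //= rmorph0.
by rewrite expr2 !(mul0r, mulr0) !add0r.
Qed.

Lemma psd_mxdrop1 n p : symm p -> psd n.+1 p -> psd n (mxdrop1 p).
Proof.
move=> p_sym p_psd c; have := p_psd (vcons 0 c); rewrite qform_recl //=.
by rewrite expr2 !(mul0r, mulr0) !add0r.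
Qed.

Lemma rat_psd_corner_ge0 n p : symm p -> rat_psd n.+1 p -> 0 <= p 0%N 0%N.
Proof.
move=> p_sym p_psd; have := p_psd (vcons 1 (fun=> 0)); rewrite qform_recl //= rmorph1.
have -> : vdrop1 (fun i => ratr (vcons 1 (fun=> 0) i)) = (fun=> 0) :> (nat -> R).
  by apply: funext => i; rewrite /vdrop1 /= rmorph0.
by rewrite lform0 qform0 expr1n mul1r mulr0 !addr0.
Qed.

Lemma rat_psd_row0_eq0 n p : symm p -> rat_psd n.+1 p -> p 0%N 0%N = 0 ->
  forall c, lform n (row0 p) c = 0.
Proof.
move=> p_sym p_psd p00; apply: lform_rat0 => c.
apply: (@rat_affine_ge0 _ (qform n (mxdrop1 p) (fun i => ratr (c i)))) => t.
by have := p_psd (vcons t c); rewrite qform_recl // p00 mulr0 add0r.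
Qed.

Lemma rat_psd_schur n q : symm q -> rat_psd n.+1 q -> 0 < q 0%N 0%N ->
  rat_psd n (schur q).
Proof.
move=> q_sym q_psd q00_gt0 c; rewrite leNgt; apply/negP => schur_lt0.
have q00 : q 0%N 0%N != 0 by rewrite gt_eqF.
set m := lform n (row0 q) (fun i => ratr (c i)).
set Q := qform n (mxdrop1 q) (fun i => ratr (c i)).
have schurE : qform n (schur q) (fun i => ratr (c i)) = Q - m ^+ 2 / q 0%N 0%N.
  by rewrite qform_schur.
have gap_gt0 : 0 < - (Q - m ^+ 2 / q 0%N 0%N) by rewrite oppr_gt0 -schurE.
(* a rational first coordinate close to the real minimiser [- m / q00] *)
have [t t_close] := rat_sq_approx (- (m / q 0%N 0%N)) q00_gt0 gap_gt0.
have := q_psd (vcons t c); rewrite qform_recl //= -/m -/Q complete_square //.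
by move: t_close; rewrite opprK; lra.
Qed.

Lemma rat_psd_psd n p : symm p -> rat_psd n p -> psd n p.
Proof.
elim: n p => [|n IHn] p p_sym p_psd c; first by rewrite /qform big_ord0.
have [p00|p00] := eqVneq (p 0%N 0%N) 0.
  rewrite qform_recl // p00 mulr0 add0r (rat_psd_row0_eq0 p_sym p_psd p00) mulr0 add0r.
  exact: IHn (symm_mxdrop1 p_sym) (rat_psd_mxdrop1 p_sym p_psd) _.
have p00_gt0 : 0 < p 0%N 0%N by rewrite lt_neqAle eq_sym p00 (rat_psd_corner_ge0 p_sym p_psd).
rewrite qform_recl // complete_square // -qform_schur //; apply: addr_ge0.
  exact/mulr_ge0/sqr_ge0/ltW.
exact: IHn (symm_schur p_sym) (rat_psd_schur p_sym p_psd p00_gt0) _.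
Qed.

(* Schur product theorem, in the form [tr (P Q) >= 0]. *)
Lemma matdot_psd_ge0 n p q : symm p -> symm q -> psd n p -> rat_psd n q ->
  0 <= matdot n p q.
Proof.
elim: n p q => [|n IHn] p q p_sym q_sym p_psd q_psd; first by rewrite /matdot big_ord0.
have [q00|q00] := eqVneq (q 0%N 0%N) 0.
  rewrite matdot_recl // q00 mulr0 add0r (rat_psd_row0_eq0 q_sym q_psd q00) mulr0 add0r.
  exact: IHn (symm_mxdrop1 p_sym) (symm_mxdrop1 q_sym)
    (psd_mxdrop1 p_sym p_psd) (rat_psd_mxdrop1 q_sym q_psd).
have q00_gt0 : 0 < q 0%N 0%N by rewrite lt_neqAle eq_sym q00 (rat_psd_corner_ge0 q_sym q_psd).
(* split [q] as [q00 u u^T + (0 (+) schur q)] with [u = q_0. / q00] *)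
pose u := vcons 1 (fun j => q 0%N j.+1 / q 0%N 0%N).
have rowE : lform n (row0 p) (vdrop1 u) * q 0%N 0%N = lform n (row0 q) (row0 p).
  by rewrite /lform mulr_suml; apply: eq_bigr => j _; rewrite /vdrop1 /u /row0 /=; field.
have dropE : matdot n (mxdrop1 p) (schur q) + q 0%N 0%N * qform n (mxdrop1 p) (vdrop1 u)
    = matdot n (mxdrop1 p) (mxdrop1 q).
  rewrite /matdot /qform mulr_sumr -big_split; apply: eq_bigr => i _ /=.
  rewrite mulr_sumr -big_split; apply: eq_bigr => j _ /=.
  by rewrite /vdrop1 /u /schur /mxdrop1 /=; field.
have := IHn _ _ (symm_mxdrop1 p_sym) (symm_schur q_sym)
  (psd_mxdrop1 p_sym p_psd) (rat_psd_schur q_sym q_psd q00_gt0).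
have := mulr_ge0 (ltW q00_gt0) (p_psd u); rewrite qform_recl //=.
rewrite matdot_recl // -rowE -dropE; nra.
Qed.

End GramForms.

Local Open Scope classical_set_scope.

Section LinearGraph.
Variables (X : lmodType rat) (R : numFieldType).
Implicit Types (G : set (X * R)) (F : set (set (X * R))).

(* Partial Q-linear functionals are represented by their graphs, so that
   Zorn's lemma applies to chains ordered by inclusion. *)
Definition linear_graph G :=
  forall k x r y u, G (x, r) -> G (y, u) -> G (k *: x + y, ratr k * r + u).
Definition functional_graph G := forall x r r', G (x, r) -> G (x, r') -> r = r'.
Definition graph_ext G y c :=
  [set p | exists x r k, G (x, r) /\ p = (x + k *: y, r + ratr k * c)].

Lemma linear_graph00 G x r : linear_graph G -> G (x, r) -> G (0, 0).
Proof.
by move=> G_lin Gx; have := G_lin (-1) _ _ _ _ Gx Gx; rewrite scaleN1r addNr rmorphN1 mulN1r addNr.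
Qed.

Lemma linear_graphZ G k x r : linear_graph G -> G (x, r) -> G (k *: x, ratr k * r).
Proof.
by move=> G_lin Gx; have := G_lin k _ _ _ _ Gx (linear_graph00 G_lin Gx); rewrite !addr0.
Qed.

Lemma linear_graph_bigcup F : F `<=` linear_graph -> total_on F subset ->
  linear_graph (\bigcup_(G in F) G).
Proof.
move=> F_lin F_tot k x r y u [G1 F1 G1x] [G2 F2 G2y].
have [G12|G21] := F_tot _ _ F1 F2.
  by exists G2 => //; apply: (F_lin _ F2) => //; exact: G12.
by exists G1 => //; apply: (F_lin _ F1) => //; exact: G21.
Qed.

Lemma functional_graph_bigcup F : F `<=` functional_graph -> total_on F subset ->
  functional_graph (\bigcup_(G in F) G).
Proof.
move=> F_fun F_tot x r r' [G1 F1 G1x] [G2 F2 G2x].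
have [G12|G21] := F_tot _ _ F1 F2.
  by apply: (F_fun _ F2 x) => //; exact: G12.
by apply: (F_fun _ F1 x) => //; exact: G21.
Qed.

Lemma sub_graph_ext G y c : G `<=` graph_ext G y c.
Proof. by move=> [x r] Gx; exists x, r, 0; rewrite scale0r rmorph0 mul0r !addr0. Qed.

Lemma graph_ext_point G y c x r : linear_graph G -> G (x, r) -> graph_ext G y c (y, c).
Proof.
move=> G_lin Gx; exists 0, 0, 1; split; first exact: linear_graph00 G_lin Gx.
by rewrite scale1r rmorph1 mul1r !add0r.
Qed.

Lemma linear_graph_ext G y c : linear_graph G -> linear_graph (graph_ext G y c).
Proof.
move=> G_lin k _ _ _ _ [x1 [r1 [k1 [Gx1 [-> ->]]]]] [x2 [r2 [k2 [Gx2 [-> ->]]]]].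
exists (k *: x1 + x2), (ratr k * r1 + r2), (k * k1 + k2); split; first exact: G_lin.
congr (_, _); first by rewrite scalerDr scalerDl scalerA addrACA.
by rewrite rmorphD rmorphM mulrDr mulrDl addrACA mulrA.
Qed.

Lemma functional_graph_ext G y c : linear_graph G -> functional_graph G ->
  (forall r, ~ G (y, r)) -> functional_graph (graph_ext G y c).
Proof.
move=> G_lin G_fun y_new _ r r' [x1 [r1 [k1 [Gx1 [-> ->]]]]] [x2 [r2 [k2 [Gx2 []]]]] xE ->.
have k12 : k1 = k2.
  apply: contraPeq (y_new (ratr ((k1 - k2)^-1) * (- r1 + r2))) => k12.
  have dy : (k1 - k2) *: y = - x1 + x2.
    by apply: (addrI x1); rewrite addNKr scalerBl addrA xE addrK.
  have -> : y = (k1 - k2)^-1 *: (- x1 + x2).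
    by rewrite -dy scalerA mulVf ?scale1r // subr_eq0.
  have Gdiff : G (- x1 + x2, - r1 + r2).
    by have := G_lin (-1) _ _ _ _ Gx1 Gx2; rewrite scaleN1r rmorphN1 mulN1r.
  by apply; exact: linear_graphZ G_lin Gdiff.
move: xE; rewrite k12 => /addIr x12; rewrite x12 in Gx1.
by rewrite (G_fun _ _ _ Gx1 Gx2).
Qed.

End LinearGraph.

Lemma graph_zorn (X Y : Type) (P : set (set (X * Y))) (D : set X) :
  P !=set0 ->
  (forall F, F `<=` P -> total_on F subset -> F !=set0 -> P (\bigcup_(G in F) G)) ->
  (forall G y, P G -> D y -> (forall r, ~ G (y, r)) ->
     exists2 G', P G' & G `<=` G' /\ exists r, G' (y, r)) ->
  exists2 G, P G & forall y, D y -> exists r, G (y, r).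
Proof.
move=> [G0 PG0] P_chain P_ext.
(* Zorn_bigcup also needs the empty chain, whose union is set0 *)
pose P0 G := P G \/ G = set0.
have [M [P0M M_max]] : exists M, P0 M /\ forall G, M `<` G -> ~ P0 G.
  apply: Zorn_bigcup => F F_P0 F_tot.
  have [[G [FG PG]]|noP] := pselect (exists G, F G /\ P G); last first.
    right; apply/seteqP; split => // p [G FG Gp].
    have [PG|Gnil] := F_P0 G FG; first by exfalso; apply: noP; exists G.
    by rewrite Gnil in Gp.
  left; have -> : \bigcup_(G in F) G = \bigcup_(G in F `&` P) G.
    apply/seteqP; split => p [H FH Hp]; last by exists H => //; case: FH.
    have [PH|Hnil] := F_P0 H FH; first by exists H.
    by rewrite Hnil in Hp.
  apply: P_chain; first by move=> G' [].
    by move=> G1 G2 [F1 _] [F2 _]; exact: F_tot.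
  by exists G.
have PM : P M.
  case: P0M => // M0; subst M.
  have [G00|G0_neq0] := pselect (G0 = set0); first by rewrite -G00.
  exfalso; apply: (M_max G0); last by left.
  by split => //; apply: contra_not G0_neq0 => G0_sub; apply/seteqP; split.
exists M => // y Dy; apply: contrapT => y_new.
have [G' PG' [MG' [r G'y]]] := P_ext M y PM Dy (fun r My => y_new (ex_intro _ r My)).
apply: (M_max G'); last by left.
by split => // G'M; apply: y_new; exists r; exact: G'M.
Qed.

Section Separation.
Variables (X : lmodType rat) (R : numFieldType) (W : set X) (z : X).
Hypotheses (W0 : W 0) (W_lin : forall k x y, W x -> W y -> W (k *: x + y)) (z_out : ~ W z).

Let S := [set p : X * R | W p.1 /\ p.2 = 0].

Let S_lin : linear_graph S.
Proof.
move=> k x r y u [Wx r0] [Wy u0]; rewrite /= in Wx Wy r0 u0.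
by split; [exact: W_lin | rewrite /= r0 u0 mulr0 addr0].
Qed.

Let S_fun : functional_graph S.
Proof. by move=> x r r' [_ r0] [_ r1]; rewrite /= in r0 r1; rewrite r0 r1. Qed.

Let good G := [/\ linear_graph G, functional_graph G, S `<=` G & G (z, 1)].

Let good_ext G y c : linear_graph G -> functional_graph G -> (forall r, ~ G (y, r)) ->
  S `<=` G -> [/\ linear_graph (graph_ext G y c), functional_graph (graph_ext G y c)
                & S `<=` graph_ext G y c].
Proof.
move=> G_lin G_fun y_new SG; split; [exact: linear_graph_ext | exact: functional_graph_ext |].
by move=> p /SG; exact: sub_graph_ext.
Qed.

Let good_maximal : exists2 M, good M & forall y, setT y -> exists r, M (y, r).
Proof.
have good0 : good (graph_ext S z 1).
  have z_out_S r : ~ S (z, r) by case.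
  have [ext_lin ext_fun ext_S] := good_ext 1 S_lin S_fun z_out_S (@subset_refl _ S).
  by split => //; apply: graph_ext_point S_lin (_ : S (0, 0)); split.
apply: graph_zorn (ex_intro _ _ good0) _ _.
  move=> F F_good F_tot [G FG]; have [_ _ SG Gz] := F_good _ FG; split.
  - by apply: linear_graph_bigcup F_tot => H /F_good[].
  - by apply: functional_graph_bigcup F_tot => H /F_good[].
  - by move=> p /SG Gp; exists G.
  - by exists G.
move=> G y [G_lin G_fun SG Gz] _ y_new.
have [ext_lin ext_fun ext_S] := good_ext 0 G_lin G_fun y_new SG.
exists (graph_ext G y 0); first by split => //; exact: sub_graph_ext.
by split; [exact: sub_graph_ext | exists 0; exact: graph_ext_point G_lin Gz].
Qed.

Lemma separating_functional :
  exists f : X -> R, [/\ ratr_linear f, forall w, W w -> f w = 0 & f z = 1].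
Proof.
have [M [M_lin M_fun SM Mz] M_total] := good_maximal.
pose f x := xget 0 [set r | M (x, r)].
have M_f x : M (x, f x) by apply: (@xgetPex _ 0 [set r | M (x, r)]); exact: M_total.
exists f; split.
- by move=> k x y; apply: M_fun (M_f _) _; exact: M_lin.
- by move=> w Ww; apply: M_fun (M_f _) _; apply: SM.
- exact: M_fun (M_f _) Mz.
Qed.

End Separation.

Section States.
Variables (R : realType) (A : algType rat) (s : A -> A).
Hypotheses (s_star : is_star s) (s_arch : archimedean s).

Definition is_state (phi : A -> R) :=
  [/\ ratr_linear phi, phi 1 = 1, forall x, phi (s x) = phi x
    & forall x, pos_cone s x -> 0 <= phi x].

Definition positive_graph (G : set (A * R)) :=
  [/\ linear_graph G, G (1, 1), forall x r, G (x, r) -> pos_cone s x -> 0 <= r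
    & forall x r, G (x, r) -> s x = x].

Lemma positive_graph_le G x r x' r' : positive_graph G ->
  G (x, r) -> G (x', r') -> pos_cone s (x' - x) -> r <= r'.
Proof.
move=> [G_lin _ G_pos _] Gx Gx' diff_ge0; rewrite -subr_ge0.
have := G_lin (-1) _ _ _ _ Gx Gx'; rewrite scaleN1r rmorphN1 mulN1r addrC [- r + _]addrC.
by move/G_pos; apply.
Qed.

Lemma positive_graph_scalar G k : positive_graph G -> G (k%:A, ratr k).
Proof. by move=> [G_lin G1 _ _]; have := linear_graphZ k G_lin G1; rewrite mulr1. Qed.

Lemma positive_graph_functional G : positive_graph G -> functional_graph G.
Proof.
move=> G_pos x r r' Gx Gx'; have x0 : pos_cone s (x - x) by rewrite subrr; exact: pos_cone0.
by apply/le_anti; rewrite (positive_graph_le G_pos Gx Gx') ?(positive_graph_le G_pos Gx' Gx).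
Qed.

Lemma positive_graph_scalars :
  positive_graph [set p | exists k : rat, p = (k%:A, ratr k)].
Proof.
split.
- move=> k _ _ _ _ [k1 [-> ->]] [k2 [-> ->]]; exists (k * k1 + k2).
  by rewrite scalerA scalerDl rmorphD rmorphM.
- by exists 1; rewrite scale1r rmorph1.
- move=> _ _ [k [-> ->]] k_ge0; rewrite ler0q leNgt; apply/negP => k_lt0.
  case: s_arch => + _; apply.
  have := pos_coneZ s_star (k := - k^-1) _ k_ge0.
  by rewrite scalerA mulNr mulVf ?lt_eqF // scaleN1r; apply; rewrite oppr_ge0 invr_le0 ltW.
- by move=> _ _ [k [-> _]]; rewrite star_scalar.
Qed.

Lemma positive_graph_bigcup F : F `<=` positive_graph -> total_on F subset -> F !=set0 ->
  positive_graph (\bigcup_(G in F) G).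
Proof.
move=> F_pos F_tot [G0 FG0]; split.
- by apply: linear_graph_bigcup F_tot => G /F_pos[].
- by exists G0 => //; have [] := F_pos _ FG0.
- by move=> x r [G FG Gx]; have [_ _ G_pos _] := F_pos _ FG; exact: G_pos.
- by move=> x r [G FG Gx]; have [_ _ _ G_herm] := F_pos _ FG; exact: G_herm Gx.
Qed.

Section Extension.
Variables (G : set (A * R)) (y : A).
Hypotheses (G_pos : positive_graph G) (y_herm : s y = y).

Let L := [set r | exists2 x, G (x, r) & pos_cone s (y - x)].

Let L_ubound x r : G (x, r) -> pos_cone s (x - y) -> ubound L r.
Proof.
move=> Gx yx r' [x' Gx' x'y]; apply: positive_graph_le G_pos Gx' Gx _.
by rewrite -[x](subrK y) -addrA; exact: pos_coneD.
Qed.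

Let L_bounded : L !=set0 /\ has_ubound L.
Proof.
have [a [ay ya]] := herm_bounded s_star y_herm (s_arch.2 y).
split; last by exists (ratr a); apply: (L_ubound (positive_graph_scalar a G_pos)).
exists (ratr (- a)), (- a)%:A; first exact: positive_graph_scalar.
by rewrite scaleNr opprK.
Qed.

Let sup_le x r : G (x, r) -> pos_cone s (x - y) -> sup L <= r.
Proof. by move=> Gx yx; apply: ge_sup L_bounded.1 (L_ubound Gx yx). Qed.

Let le_sup x r : G (x, r) -> pos_cone s (y - x) -> r <= sup L.
Proof. by move=> Gx xy; apply: ub_le_sup L_bounded.2 _ _; exists x. Qed.

Lemma positive_graph_ext : positive_graph (graph_ext G y (sup L)).
Proof.
have [G_lin G1 G_ge0 G_herm] := G_pos.
split; [exact: linear_graph_ext | exact: sub_graph_ext | | ]; last first.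
  move=> _ _ [x [r [k [Gx [-> _]]]]].
  by rewrite (linD (star_linear s_star)) (linZ (star_linear s_star)) y_herm (G_herm _ _ Gx).
move=> _ _ [x [r [k [Gx [-> ->]]]]] xy_ge0.
have [k_lt0|k_gt0|k0] := ltgtP k 0; last first.
- by move: xy_ge0; rewrite k0 scale0r addr0 rmorph0 mul0r addr0; exact: G_ge0.
- (* [- r / k] is in L *)
  have := le_sup (linear_graphZ (- k^-1) G_lin Gx).
  rewrite rmorphN fmorphV mulNr -mulrN ler_pdivrMl ?ltr0q //.
  have -> : y - - k^-1 *: x = k^-1 *: (x + k *: y).
    by rewrite scaleNr opprK scalerDr scalerA mulVf ?gt_eqF // scale1r addrC.
  by move=> /(_ (pos_coneZ s_star _ xy_ge0)); rewrite invr_ge0 ltW // => /(_ isT); lra.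
(* [r / (- k)] bounds L *)
have := sup_le (linear_graphZ ((- k)^-1) G_lin Gx).
rewrite fmorphV rmorphN ler_pdivlMl ?oppr_gt0 ?ltrq0 //.
have -> : (- k)^-1 *: x - y = (- k)^-1 *: (x + k *: y).
  by rewrite scalerDr scalerA invrN mulNr mulVf ?lt_eqF // scaleN1r.
by move=> /(_ (pos_coneZ s_star _ xy_ge0)); rewrite invr_ge0 oppr_ge0 ltW // => /(_ isT); lra.
Qed.

End Extension.

Theorem state_exists : exists phi : A -> R, is_state phi.
Proof.
have s_lin := star_linear s_star.
have [M M_pos M_total] : exists2 M, positive_graph M & forall y, s y = y -> exists r, M (y, r).
  apply: graph_zorn (ex_intro _ _ positive_graph_scalars) positive_graph_bigcup _.
  move=> G y G_pos y_herm _; eexists; first exact: positive_graph_ext G_pos y_herm.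
  have [G_lin G1 _ _] := G_pos.
  by split; [exact: sub_graph_ext | eexists; exact: graph_ext_point G_lin G1].
pose herm x := 2^-1 *: (x + s x).
have herm_herm x : s (herm x) = herm x by rewrite (linZ s_lin) (linD s_lin) starK // addrC.
have herm_id x : s x = x -> herm x = x.
  by move=> xh; rewrite /herm xh -mulr2n -scaler_nat scalerA mulVf // scale1r.
pose phi x := xget 0 [set r | M (herm x, r)].
have M_phi x : M (herm x, phi x).
  by apply: (@xgetPex _ 0 [set r | M (herm x, r)]); exact: M_total.
have M_fun := positive_graph_functional M_pos.
have [M_lin M1 M_ge0 _] := M_pos.
exists phi; split.
- move=> k x y; apply: M_fun (M_phi _) _.
  have -> : herm (k *: x + y) = k *: herm x + herm y.
    by rewrite /herm (linD s_lin) (linZ s_lin) !scalerDr !scalerA [k * _]mulrC addrACA.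
  exact: M_lin.
- by apply: M_fun (M_phi _) _; rewrite herm_id ?star1.
- by move=> x; rewrite /phi /herm starK // addrC.
- by move=> x x_ge0; apply: M_ge0 (M_phi x) _; rewrite herm_id ?pos_cone_herm.
Qed.

End States.

Lemma state_gram_psd (R : realType) (C : algType rat) (s : C -> C) (phi : C -> R)
    (a : nat -> C) n :
  is_star s -> is_state s phi ->
  symm (fun i j => phi (s (a i) * a j)) /\ rat_psd n (fun i j => phi (s (a i) * a j)).
Proof.
move=> s_star [phi_lin _ phi_s phi_ge0]; split.
  by move=> i j; rewrite -phi_s starM ?starK.
move=> c; pose x := \sum_(i < n) c i *: a i.
suff -> : qform n (fun i j => phi (s (a i) * a j)) (fun i => ratr (c i)) = phi (s x * x).
  exact/phi_ge0/pos_cone_sq.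
have s_lin := star_linear s_star.
rewrite /x (lin_sum s_lin) mulr_suml (ratr_linear_sum phi_lin) /qform.
apply: eq_bigr => i _; rewrite mulr_sumr (ratr_linear_sum phi_lin); apply: eq_bigr => j _.
by rewrite (linZ s_lin) -scalerAl -scalerAr scalerA (ratr_linearZ phi_lin) rmorphM mulrA.
Qed.

Section TensorProduct.
Variables (A B T : algType rat) (t : A -> B -> T).
Hypothesis t_tensor : is_tensor_algebra t.

Lemma tensor_linearl b : linear (t^~ b).
Proof. by case: t_tensor => -[t_lin _] _ _ _ k a a'; exact: t_lin. Qed.
Lemma tensor_linearr a : linear (t a).
Proof. by case: t_tensor => -[_ t_lin] _ _ _ k b b'; exact: t_lin. Qed.
Lemma tensor_mul a a' b b' : t a b * t a' b' = t (a * a') (b * b').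
Proof. by case: t_tensor. Qed.
Lemma tensor_one : t 1 1 = 1.
Proof. by case: t_tensor. Qed.

Lemma tensor_linear_eq (V : lmodType rat) (g g' : T -> V) :
  linear_map g -> linear_map g' -> (forall a b, g (t a b) = g' (t a b)) -> g =1 g'.
Proof.
move=> g_lin g'_lin gg' z; have [_ t_univ _ _] := t_tensor.
have gt_bilin : bilinear_map (fun a b => g (t a b)).
  by split=> k *; rewrite ?tensor_linearl ?tensor_linearr g_lin.
have [h [_ _ h_uniq]] := t_univ _ _ gt_bilin.
by rewrite (h_uniq _ g_lin) ?(h_uniq _ g'_lin).
Qed.

Definition pure_span z := exists l : seq (A * B), z = \sum_(p <- l) t p.1 p.2.

Lemma pure_span_tensor a b : pure_span (t a b).
Proof. by exists [:: (a, b)]; rewrite big_seq1. Qed.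

Lemma pure_spanD x y : pure_span x -> pure_span y -> pure_span (x + y).
Proof. by move=> [l1 ->] [l2 ->]; exists (l1 ++ l2); rewrite big_cat. Qed.

Lemma pure_spanZ k x : pure_span x -> pure_span (k *: x).
Proof.
move=> [l ->]; exists [seq (k *: p.1, p.2) | p <- l].
by rewrite big_map scaler_sumr; apply: eq_bigr => p _; rewrite (linZ (tensor_linearl _)).
Qed.

Theorem tensor_spanned z : pure_span z.
Proof.
apply: contrapT => z_out.
have pure_span0 : pure_span 0 by exists [::]; rewrite big_nil.
have pure_span_lin k x y : pure_span x -> pure_span y -> pure_span (k *: x + y).
  by move=> x_span y_span; apply/pure_spanD/y_span/pure_spanZ.
have [f [f_lin f_pure f_z]] := separating_functional rat pure_span0 pure_span_lin z_out.
have zero_lin : linear_map (fun _ : T => 0 : realQ rat) by move=> k x y; rewrite scaler0 addr0.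
have := tensor_linear_eq (ratr_linear_realQ f_lin) zero_lin _ z.
by rewrite f_z => /(_ (fun a b => f_pure _ (pure_span_tensor a b))) /eqP; rewrite oner_eq0.
Qed.
End TensorProduct.

Section TensorArchimedean.
Variables (A B T : algType rat) (sA : A -> A) (sB : B -> B).
Variables (t : A -> B -> T) (sT : T -> T).
Hypotheses (sA_star : is_star sA) (sB_star : is_star sB) (sT_star : is_star sT).
Hypotheses (t_tensor : is_tensor_algebra t) (sT_t : forall a b, sT (t a b) = t (sA a) (sB b)).

Lemma pos_cone_tensor u v : pos_cone sA u -> pos_cone sB v -> pos_cone sT (t u v).
Proof.
move=> [lu ->] [lv ->]; exists [seq t x y | x <- lu, y <- lv]; rewrite big_allpairs_dep.
rewrite (lin_sum (tensor_linearl t_tensor _)); apply: eq_bigr => x _.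
rewrite (lin_sum (tensor_linearr t_tensor _)); apply: eq_bigr => y _.
by rewrite sT_t (tensor_mul t_tensor).
Qed.

Lemma norm_finite_tensor a b :
  norm_finite sA a -> norm_finite sB b -> norm_finite sT (t a b).
Proof.
move=> [al [al_gt0 a_le]] [be [be_gt0 b_le]]; exists (al * be); split; first exact: mulr_gt0.
have tl := tensor_linearl t_tensor; have tr := tensor_linearr t_tensor.
rewrite /star_le sT_t (tensor_mul t_tensor).
have -> : (al * be)%:A - t (sA a * a) (sB b * b) =
    t (al%:A - sA a * a) (sB b * b) + t al%:A (be%:A - sB b * b).
  rewrite (linB (tl _)) (linB (tr _)) [RHS]addrC addrA subrK.
  by rewrite (linZ (tl _)) (linZ (tr _)) (tensor_one t_tensor) scalerA.
by apply: pos_coneD; apply: pos_cone_tensor => //; [exact: pos_cone_sq | exact/pos_cone_scalar/ltW].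
Qed.

Lemma tensor_state_ge0 (R : realType) (phi : A -> R) (psi : B -> R) (Phi : T -> R) :
  is_state sA phi -> is_state sB psi -> ratr_linear Phi ->
  (forall a b, Phi (t a b) = phi a * psi b) -> forall x, pos_cone sT x -> 0 <= Phi x.
Proof.
move=> phi_state psi_state Phi_lin Phi_t _ [l ->].
rewrite (ratr_linear_sum Phi_lin); apply: sumr_ge0 => z _.
have [tl ->] := tensor_spanned t_tensor z.
rewrite (lin_sum (star_linear sT_star)) mulr_suml (ratr_linear_sum Phi_lin).
under eq_bigr => p _ do rewrite mulr_sumr (ratr_linear_sum Phi_lin).
under eq_bigr => p _ do under eq_bigr => q _ do rewrite sT_t (tensor_mul t_tensor) Phi_t.
rewrite (big_nth (0, 0)) big_mkord; under eq_bigr => i _ do rewrite (big_nth (0, 0)) big_mkord.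
have [P_sym P_psd] := state_gram_psd (fun i => (nth (0, 0) tl i).1) (size tl) sA_star phi_state.
have [Q_sym Q_psd] := state_gram_psd (fun i => (nth (0, 0) tl i).2) (size tl) sB_star psi_state.
exact: matdot_psd_ge0 P_sym Q_sym (rat_psd_psd P_sym P_psd) Q_psd.
Qed.

Theorem tensor_archimedean : archimedean sA -> archimedean sB -> archimedean sT.
Proof.
move=> A_arch B_arch.
have [phi phi_state] := state_exists Rdefinitions.R sA_star A_arch.
have [psi psi_state] := state_exists Rdefinitions.R sB_star B_arch.
have [[_ phi1 _ _] [_ psi1 _ _]] := (phi_state, psi_state).
have [_ t_univ _ _] := t_tensor.
have phi_psi_bilin : bilinear_map (fun a b => phi a * psi b : realQ Rdefinitions.R).
  have [[phi_lin _ _ _] [psi_lin _ _ _]] := (phi_state, psi_state).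
  split=> k *; rewrite /= ?(phi_lin, psi_lin); first by rewrite mulrDl -mulrA.
  by rewrite mulrDr mulrCA.
have [Phi [Phi_lin Phi_t _]] := t_univ _ _ phi_psi_bilin.
have Phi_ge0 := tensor_state_ge0 phi_state psi_state Phi_lin Phi_t.
split.
  move=> /Phi_ge0; rewrite -scaleN1r (ratr_linearZ Phi_lin) -(tensor_one t_tensor) Phi_t phi1 psi1.
  by rewrite rmorphN1 !mulr1 ler0N1.
move=> z; have [l ->] := tensor_spanned t_tensor z.
elim: l => [|p l IHl]; first by rewrite big_nil; exact: norm_finite0.
by rewrite big_cons; apply: norm_finiteD => //; apply: norm_finite_tensor; [apply: A_arch.2 | apply: B_arch.2].
Qed.
End TensorArchimedean.

Lemma prod_archimedean (A B : algType rat) (sA : A -> A) (sB : B -> B) :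
  is_star sA -> is_star sB -> archimedean sA -> archimedean sB ->
  archimedean (fun p : (A * B)%type => (sA p.1, sB p.2)).
Proof.
move=> sA_star sB_star [A_neg A_nf] [_ B_nf]; split.
  move=> [l /(congr1 fst)]; rewrite raddf_sum /= => m1E; apply: A_neg.
  by exists [seq p.1 | p <- l]; rewrite big_map.
move=> [x y]; have [a [a_gt0 xa]] := A_nf x; have [b [b_gt0 yb]] := B_nf y.
exists (a + b); split; first exact: addr_gt0.
have [la laE] : pos_cone sA ((a + b)%:A - sA x * x).
  by rewrite scalerDl addrAC; apply: pos_coneD xa _; exact/pos_cone_scalar/ltW.
have [lb lbE] : pos_cone sB ((a + b)%:A - sB y * y).
  by rewrite scalerDl -addrA; apply: pos_coneD yb; exact/pos_cone_scalar/ltW.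
exists ([seq (u, 0) | u <- la] ++ [seq (0, v) | v <- lb]).
rewrite [RHS]surjective_pairing !raddf_sum !big_cat !big_map /=.
by rewrite !mulr0 !big1_eq addr0 add0r -laE -lbE.
Qed.

Unset Implicit Arguments.

Theorem lemma2p6 (A B : algType rat) (sA : A -> A) (sB : B -> B) :
  is_star sA -> is_star sB -> archimedean sA -> archimedean sB ->
  (archimedean (fun p : (A * B)%type => (sA p.1, sB p.2)))
  /\ (forall (T : algType rat) (t : A -> B -> T) (sT : T -> T),
        is_tensor_algebra t -> is_star sT ->
        (forall a b, sT (t a b) = t (sA a) (sB b)) ->
        archimedean sT).
Proof.
move=> sA_star sB_star A_arch B_arch; split; first exact: prod_archimedean.
move=> T t sT t_tensor sT_star sT_t.
exact: (tensor_archimedean sA_star sB_star sT_star t_tensor sT_t A_arch B_arch).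
Qed.
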